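(* Let $m>-\tfrac12$ be real and $k$ a (real or complex) number, and let $c_n=\int_{-\infty}^{\infty} e^{-mx^2}e^{ikx}\,\widehat{H}_n(x)\,dx$ for $n\ge 0$, so that $e^{-mx^2}e^{ikx}=\sum_{n\ge0}c_n\widehat{H}_n$. Then for all $n\ge 1$, \[ c_{n+1}=\frac{1}{2m+1}\, ik\sqrt{\frac{2}{n+1}}\,c_n-\frac{2m-1}{2m+1}\sqrt{\frac{n}{n+1}}\,c_{n-1}. \]
   Context: The Hermite polynomials $H_n$ are orthogonal on $\mathbb{R}$ with respect to $e^{-x^2}$, with $\int H_mH_ne^{-x^2}dx=\sqrt{\pi}\,2^n n!\,\delta_{mn}$. The (normalized) Hermite functions are $\widehat{H}_n(x)=\frac{1}{\pi^{1/4}\sqrt{2^n n!}}e^{-x^2/2}H_n(x)$, $n\ge0$; they form an orthonormal basis of $L^2(\mathbb{R})$. *)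

From Stdlib Require Import Reals Factorial.
From Coquelicot Require Import Coquelicot.
Open Scope R_scope.

(* Physicists' Hermite polynomials: H_0 = 1, H_1 = 2x,
   H_{n+2} = 2x H_{n+1} - 2(n+1) H_n. *)
Fixpoint hermite_pair (n : nat) (x : R) : R * R :=
  match n with
  | O => (1, 2 * x)
  | S p => let (a, b) := hermite_pair p x in (b, 2 * x * b - 2 * INR (S p) * a)
  end.
Definition hermite (n : nat) (x : R) : R := fst (hermite_pair n x).

Definition hermite_fun (n : nat) (x : R) : R :=
  / (Rpower PI (1/4) * sqrt (2 ^ n * INR (fact n))) * exp (- x ^ 2 / 2) * hermite n x.

Definition cexp (z : C) : C := (exp (Re z) * cos (Im z), exp (Re z) * sin (Im z)).

Definition hermite_coef (m : R) (k : C) (n : nat) : C :=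
  @RInt_gen C_R_CompleteNormedModule
    (fun x : R => ((RtoC (exp (- m * x ^ 2)) * cexp (Ci * k * RtoC x))
                   * RtoC (hermite_fun n x))%C)
    (Rbar_locally m_infty) (Rbar_locally p_infty).

(* Write the integrand as N_n g(x) H_n(x) with g(x) = exp(-(m + 1/2) x^2 + i k x) and N_n the
   normalisation of \hat H_n.  Since H_{n+1}' = 2(n+1) H_n and 2x H_{n+1} = H_{n+2} + 2(n+1) H_n,
     (g H_{n+1})' = -(2m+1)/2 g H_{n+2} + (1-2m)(n+1) g H_n + i k g H_{n+1},
   and the left-hand side integrates to 0 over R because g H_{n+1} decays like a Gaussian.
   Rescaling this three-term relation between the moments of g H_n by N_n, where
   N_{n+1} / N_n = 1 / sqrt(2(n+1)), gives the recurrence. *)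

From Stdlib Require Import Reals Factorial Lra Lia.
From Coquelicot Require Import Coquelicot.
Open Scope R_scope.

Lemma hermite_0 x : hermite 0 x = 1.
Proof. reflexivity. Qed.

Lemma hermite_1 x : hermite 1 x = 2 * x.
Proof. reflexivity. Qed.

Lemma hermite_SS p x :
  hermite (S (S p)) x = 2 * x * hermite (S p) x - 2 * INR (S p) * hermite p x.
Proof.
  unfold hermite; cbn [hermite_pair].
  now destruct (hermite_pair p x).
Qed.

Lemma nat_pair_ind (P : nat -> Prop) :
  P 0%nat -> P 1%nat -> (forall p, P p -> P (S p) -> P (S (S p))) -> forall n, P n.
Proof.
  intros P0 P1 PSS n. apply Nat.pair_induction; auto.
  now intros ? ? ->.
Qed.

Lemma is_derive_hermite n x : is_derive (hermite n) x (2 * INR n * hermite (pred n) x).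
Proof.
  revert x; induction n as [| | p IHp IHSp] using nat_pair_ind; intro x.
  - apply (is_derive_ext (fun _ => 1)); [now intro|].
    auto_derive; auto. simpl; ring.
  - apply (is_derive_ext (fun t => 2 * t)); [now intro|].
    auto_derive; auto. rewrite hermite_0; simpl; ring.
  - apply (is_derive_ext (fun t => 2 * t * hermite (S p) t - 2 * INR (S p) * hermite p t)).
    { intro t. now rewrite hermite_SS. }
    set (c := INR (S p)).
    auto_derive.
    + split; [eexists; apply IHSp|]. split; [eexists; apply IHp|easy].
    + rewrite (is_derive_unique (fun t : R => hermite (S p) t) x _ (IHSp x)).
      rewrite (is_derive_unique (fun t : R => hermite p t) x _ (IHp x)).
      destruct p as [|p']; simpl pred.
      * rewrite hermite_1, hermite_0. unfold c. simpl; ring.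
      * rewrite (hermite_SS p' x). unfold c. rewrite !S_INR; ring.
Qed.

Lemma exp_le_exp x y : x <= y -> exp x <= exp y.
Proof.
  intro Hxy. destruct (Req_dec x y) as [->|Hne]; [lra|].
  left. apply exp_increasing. lra.
Qed.

Definition exp_bounded (c : R) (f : R -> R) : Prop :=
  exists A, forall x, Rabs (f x) <= A * exp (c * Rabs x).

Notation exp_decaying f := (exp_bounded (-1) f).

Lemma exp_bounded_nonneg c f :
  exp_bounded c f -> exists A, 0 <= A /\ forall x, Rabs (f x) <= A * exp (c * Rabs x).
Proof.
  intros [A HA]. exists A. split; [|exact HA].
  specialize (HA 0). rewrite Rabs_R0, Rmult_0_r, exp_0 in HA.
  pose proof (Rabs_pos (f 0)). lra.
Qed.

Lemma exp_bounded_ext c f g :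
  (forall x, f x = g x) -> exp_bounded c f -> exp_bounded c g.
Proof. intros E [A HA]. exists A. intro x. rewrite <- E. apply HA. Qed.

Lemma exp_bounded_le c d f : c <= d -> exp_bounded c f -> exp_bounded d f.
Proof.
  intros Hcd Hf. destruct (exp_bounded_nonneg _ _ Hf) as [A [HA Hf']].
  exists A. intro x. eapply Rle_trans; [apply Hf'|].
  apply Rmult_le_compat_l; [exact HA|].
  apply exp_le_exp. pose proof (Rabs_pos x). nra.
Qed.

Lemma exp_bounded_lincomb c a b f g :
  exp_bounded c f -> exp_bounded c g -> exp_bounded c (fun x => a * f x + b * g x).
Proof.
  intros [A HA] [B HB]. exists (Rabs a * A + Rabs b * B). intro x.
  eapply Rle_trans; [apply Rabs_triang|]. rewrite !Rabs_mult.
  specialize (HA x). specialize (HB x).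
  pose proof (Rabs_pos a). pose proof (Rabs_pos b). nra.
Qed.

Lemma exp_bounded_mul_id c f : exp_bounded c f -> exp_bounded (c + 1) (fun x => x * f x).
Proof.
  intro Hf. destruct (exp_bounded_nonneg _ _ Hf) as [A [HA Hf']].
  exists A. intro x. rewrite Rabs_mult, Rmult_plus_distr_r, Rmult_1_l, exp_plus.
  pose proof (exp_ineq1_le (Rabs x)). pose proof (Rabs_pos x).
  pose proof (Hf' x). pose proof (exp_pos (c * Rabs x)). pose proof (Rabs_pos (f x)).
  nra.
Qed.

Lemma exp_bounded_hermite n : exp_bounded (INR n) (hermite n).
Proof.
  induction n as [| | p IHp IHSp] using nat_pair_ind.
  - exists 1. intro x. rewrite hermite_0, Rabs_R1. simpl. rewrite Rmult_0_l, exp_0. lra.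
  - exists 2. intro x. rewrite hermite_1, Rabs_mult, (Rabs_right 2) by lra.
    simpl. rewrite Rmult_1_l.
    pose proof (exp_ineq1_le (Rabs x)). lra.
  - apply (exp_bounded_ext _
             (fun x => 2 * (x * hermite (S p) x) + - (2 * INR (S p)) * hermite p x)).
    { intro x. rewrite hermite_SS. ring. }
    apply exp_bounded_lincomb.
    + rewrite (S_INR (S p)). now apply exp_bounded_mul_id.
    + apply (exp_bounded_le (INR p)); [apply le_INR; lia|exact IHp].
Qed.

Lemma quadratic_le_vertex a b t : 0 < a -> - a * t ^ 2 + b * t <= b ^ 2 / (4 * a).
Proof.
  intro Ha. apply (Rmult_le_reg_l (4 * a)); [lra|].
  replace (4 * a * (b ^ 2 / (4 * a))) with (b ^ 2) by (field; lra).
  pose proof (pow2_ge_0 (2 * a * t - b)). nra.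
Qed.

Lemma exp_bounded_mul_gaussian a b c d f : 0 < a ->
  exp_bounded c f -> exp_bounded d (fun x => exp (- a * x ^ 2 + b * x) * f x).
Proof.
  intros Ha Hf. destruct (exp_bounded_nonneg _ _ Hf) as [A [HA Hf']].
  set (beta := Rabs b + Rabs (c - d)).
  exists (A * exp (beta ^ 2 / (4 * a))). intro x.
  rewrite Rabs_mult, (Rabs_right (exp _)) by (apply Rle_ge, Rlt_le, exp_pos).
  eapply Rle_trans.
  { apply Rmult_le_compat_l; [apply Rlt_le, exp_pos|apply Hf']. }
  rewrite Rmult_assoc, (Rmult_comm (exp _)), Rmult_assoc, <- !exp_plus.
  apply Rmult_le_compat_l; [exact HA|]. apply exp_le_exp.
  assert (Hx2 : x ^ 2 = Rabs x ^ 2) by (now rewrite <- (pow2_abs x)).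
  assert (Hb : b * x <= Rabs b * Rabs x).
  { rewrite <- Rabs_mult. apply Rle_abs. }
  assert (Hcd : (c - d) * Rabs x <= Rabs (c - d) * Rabs x).
  { apply Rmult_le_compat_r; [apply Rabs_pos|apply Rle_abs]. }
  pose proof (quadratic_le_vertex a beta (Rabs x) Ha).
  unfold beta in *. rewrite Hx2. lra.
Qed.

Lemma exp_bounded_mul_bounded c f g :
  exp_bounded c f -> (forall x, Rabs (g x) <= 1) -> exp_bounded c (fun x => f x * g x).
Proof.
  intros Hf Hg. destruct (exp_bounded_nonneg _ _ Hf) as [A [HA Hf']].
  exists A. intro x. rewrite Rabs_mult.
  pose proof (Hf' x). pose proof (Hg x). pose proof (Rabs_pos (f x)). pose proof (Rabs_pos (g x)).
  nra.
Qed.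

Notation is_RInt_line f l :=
  (@is_RInt_gen R_NormedModule f (Rbar_locally m_infty) (Rbar_locally p_infty) l).
Notation ex_RInt_line f :=
  (@ex_RInt_gen R_NormedModule f (Rbar_locally m_infty) (Rbar_locally p_infty)).
Notation RInt_line f :=
  (@RInt_gen R_CompleteNormedModule f (Rbar_locally m_infty) (Rbar_locally p_infty)).

Lemma exp_neg_small A eps : 0 <= A -> 0 < eps -> exists M, 0 <= M /\ A * exp (- M) < eps.
Proof.
  intros HA Heps. set (M := Rabs (ln ((A + 1) / eps))).
  assert (Hpos : 0 < (A + 1) / eps) by (apply Rdiv_lt_0_compat; lra).
  assert (HM : exp (- M) <= eps / (A + 1)).
  { replace (eps / (A + 1)) with (exp (- ln ((A + 1) / eps)))
      by (rewrite exp_Ropp, exp_ln by exact Hpos; field; lra).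
    apply exp_le_exp. pose proof (Rle_abs (ln ((A + 1) / eps))). unfold M. lra. }
  exists M. split; [apply Rabs_pos|].
  apply Rle_lt_trans with (A * (eps / (A + 1))); [now apply Rmult_le_compat_l|].
  apply (Rmult_lt_reg_r (A + 1)); [lra|].
  replace (A * (eps / (A + 1)) * (A + 1)) with (A * eps) by (field; lra). nra.
Qed.

Lemma exp_decaying_lim f :
  exp_decaying f ->
  filterlim f (Rbar_locally m_infty) (locally 0) /\ filterlim f (Rbar_locally p_infty) (locally 0).
Proof.
  intro Hf. destruct (exp_bounded_nonneg _ _ Hf) as [A [HA Hf']].
  assert (Hsmall : forall eps : posreal,
             exists M, 0 <= M /\ forall x, M <= Rabs x -> Rabs (f x) < eps).
  { intro eps. destruct (exp_neg_small A eps HA (cond_pos eps)) as [M [HM0 HM]].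
    exists M. split; [exact HM0|]. intros x Hx. eapply Rle_lt_trans; [apply Hf'|].
    eapply Rle_lt_trans; [|exact HM].
    apply Rmult_le_compat_l; [exact HA|]. apply exp_le_exp. lra. }
  split; apply filterlim_locally; intro eps; destruct (Hsmall eps) as [M [HM0 HM]].
  - simpl. exists (- M). intros x Hx. change (Rabs (f x - 0) < eps).
    rewrite Rminus_0_r. apply HM. rewrite Rabs_left; lra.
  - simpl. exists M. intros x Hx. change (Rabs (f x - 0) < eps).
    rewrite Rminus_0_r. apply HM. rewrite Rabs_right; lra.
Qed.

Lemma is_RInt_line_primitive F f la lb :
  (forall x, is_derive F x (f x)) -> (forall x, continuous f x) ->
  filterlim F (Rbar_locally m_infty) (locally la) ->
  filterlim F (Rbar_locally p_infty) (locally lb) ->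
  is_RInt_line f (lb - la).
Proof.
  intros HF Hf Hla Hlb.
  assert (HD : forall x, Derive F x = f x) by (intro x; apply is_derive_unique, HF).
  apply (is_RInt_gen_ext (Derive F)); [apply filter_forall; intros; apply HD|].
  apply is_RInt_gen_Derive; try assumption; apply filter_forall; intros.
  - eexists; apply HF.
  - apply (continuous_ext f); [intro; symmetry; apply HD|apply Hf].
Qed.

Lemma abs_RInt_le_primitive f E e u v :
  u <= v -> ex_RInt f u v ->
  (forall x, is_derive E x (e x)) -> (forall x, continuous e x) ->
  (forall x, u <= x <= v -> Rabs (f x) <= e x) ->
  Rabs (RInt f u v) <= E v - E u.
Proof.
  intros Huv Hf HE He Hfe.
  apply (norm_RInt_le f e u v); [exact Huv|exact Hfe| |].
  - apply (@RInt_correct R_CompleteNormedModule), Hf.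
  - apply (@is_RInt_derive R_CompleteNormedModule E e); intros; [apply HE|apply He].
Qed.

Section ExpDecayingIntegral.

Variables (f : R -> R) (A : R).
Hypothesis f_cont : forall x, continuous f x.
Hypothesis A_nonneg : 0 <= A.
Hypothesis f_le : forall x, Rabs (f x) <= A * exp (-1 * Rabs x).

Lemma ex_RInt_cont u v : ex_RInt f u v.
Proof. apply (@ex_RInt_continuous R_CompleteNormedModule). intros; apply f_cont. Qed.

Lemma abs_RInt_tail_p u v : 0 <= u <= v -> Rabs (RInt f u v) <= A * exp (- u).
Proof.
  intro Huv.
  apply Rle_trans with ((- A * exp (- v)) - (- A * exp (- u))).
  - apply (abs_RInt_le_primitive f (fun x => - A * exp (- x)) (fun x => A * exp (- x)));
      [lra|apply ex_RInt_cont| | |].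
    + intro x. auto_derive; [easy|ring].
    + intro x. apply (ex_derive_continuous (fun x => A * exp (- x))). auto_derive; easy.
    + intros x Hx. replace (- x) with (-1 * Rabs x) by (rewrite Rabs_right; lra).
      apply f_le.
  - pose proof (exp_pos (- v)). nra.
Qed.

Lemma abs_RInt_tail_m u v : u <= v <= 0 -> Rabs (RInt f u v) <= A * exp v.
Proof.
  intro Huv.
  apply Rle_trans with (A * exp v - A * exp u).
  - apply (abs_RInt_le_primitive f (fun x => A * exp x) (fun x => A * exp x));
      [lra|apply ex_RInt_cont| | |].
    + intro x. auto_derive; [easy|ring].
    + intro x. apply (ex_derive_continuous (fun x => A * exp x)). auto_derive; easy.
    + intros x Hx. replace x with (-1 * Rabs x) at 2 by (rewrite Rabs_left1; lra).
      apply f_le.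
  - pose proof (exp_pos u). nra.
Qed.

Lemma abs_RInt_far u v M : 0 <= M ->
  (M <= u /\ M <= v) \/ (u <= - M /\ v <= - M) -> Rabs (RInt f u v) <= A * exp (- M).
Proof.
  intros HM Hside.
  assert (Hle : forall a b, a <= b -> (M <= a /\ M <= b) \/ (a <= - M /\ b <= - M) ->
                 Rabs (RInt f a b) <= A * exp (- M)).
  { intros a b Hab [[Ha Hb]|[Ha Hb]].
    - eapply Rle_trans; [apply abs_RInt_tail_p; lra|].
      apply Rmult_le_compat_l; [exact A_nonneg|]. apply exp_le_exp. lra.
    - eapply Rle_trans; [apply abs_RInt_tail_m; lra|].
      apply Rmult_le_compat_l; [exact A_nonneg|]. apply exp_le_exp. lra. }
  destruct (Rle_dec u v) as [Huv|Hvu]; [now apply Hle|].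
  rewrite <- opp_RInt_swap by apply ex_RInt_cont. unfold opp; simpl. rewrite Rabs_Ropp.
  apply Hle; lra.
Qed.

Lemma RInt_from_0_cvg s : s = m_infty \/ s = p_infty ->
  exists l, filterlim (fun x => RInt f 0 x) (Rbar_locally s) (locally l).
Proof.
  intro Hs. apply filterlim_locally_cauchy. intro eps.
  destruct (exp_neg_small A eps A_nonneg (cond_pos eps)) as [M [HM0 HM]].
  assert (Hball : forall u v, (M <= u /\ M <= v) \/ (u <= - M /\ v <= - M) ->
                   ball (RInt f 0 u) eps (RInt f 0 v)).
  { intros u v Huv. change (Rabs (RInt f 0 v - RInt f 0 u) < eps).
    rewrite <- (RInt_Chasles f 0 u v) by apply ex_RInt_cont.
    change (Rabs (RInt f 0 u + RInt f u v - RInt f 0 u) < eps).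
    rewrite Rplus_minus_l.
    eapply Rle_lt_trans; [apply (abs_RInt_far u v M HM0 Huv)|exact HM]. }
  destruct Hs as [-> | ->].
  - exists (fun x => x < - M). split; [now exists (- M)|].
    intros u v Hu Hv. apply Hball. lra.
  - exists (fun x => M < x). split; [now exists M|].
    intros u v Hu Hv. apply Hball. lra.
Qed.

Lemma ex_RInt_line_exp_decaying : ex_RInt_line f.
Proof.
  destruct (RInt_from_0_cvg m_infty) as [la Hla]; [now left|].
  destruct (RInt_from_0_cvg p_infty) as [lb Hlb]; [now right|].
  exists (lb - la). apply (is_RInt_line_primitive (fun x => RInt f 0 x)); auto.
  intro x. apply is_derive_RInt with 0; [|apply f_cont].
  apply filter_forall. intro y. apply (@RInt_correct R_CompleteNormedModule), ex_RInt_cont.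
Qed.

End ExpDecayingIntegral.

Lemma RInt_line_correct f : (forall x, continuous f x) -> exp_decaying f ->
  is_RInt_line f (RInt_line f).
Proof.
  intros Hc Hf. destruct (exp_bounded_nonneg _ _ Hf) as [A [HA Hf']].
  apply (@RInt_gen_correct R_CompleteNormedModule);
    [apply Proper_StrongProper, Rbar_locally_filter..|].
  exact (ex_RInt_line_exp_decaying f A Hc HA Hf').
Qed.

Lemma is_RInt_line_unique f l1 l2 : is_RInt_line f l1 -> is_RInt_line f l2 -> l1 = l2.
Proof.
  intros H1 H2.
  rewrite <- (@is_RInt_gen_unique R_CompleteNormedModule _ _ _ _ f l1 H1),
          <- (@is_RInt_gen_unique R_CompleteNormedModule _ _ _ _ f l2 H2);
    try reflexivity; apply Proper_StrongProper, Rbar_locally_filter.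
Qed.

Lemma is_RInt_line_plus f g lf lg :
  is_RInt_line f lf -> is_RInt_line g lg -> is_RInt_line (fun x => f x + g x) (lf + lg).
Proof. intros Hf Hg. exact (is_RInt_gen_plus f g lf lg Hf Hg). Qed.

Lemma is_RInt_line_scal a f l : is_RInt_line f l -> is_RInt_line (fun x => a * f x) (a * l).
Proof. intro Hf. exact (is_RInt_gen_scal f a l Hf). Qed.

Lemma is_RInt_line_derive_decaying F f :
  (forall x, is_derive F x (f x)) -> (forall x, continuous f x) -> exp_decaying F ->
  is_RInt_line f 0.
Proof.
  intros HF Hf Hdec. destruct (exp_decaying_lim F Hdec) as [Hm Hp].
  rewrite <- (Rminus_0_r 0). exact (is_RInt_line_primitive F f 0 0 HF Hf Hm Hp).
Qed.

Section GaussianHermiteIntegrals.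

Variables (m kr ki : R).
Hypothesis hm : - (1/2) < m.

(* The modulus e^{-ki x} of e^{ikx} goes into the Gaussian factor; the phase e^{i kr x} is
   carried by [cos_part] and [sin_part]. *)
Definition weighted_hermite j x := exp (- (m + 1/2) * x ^ 2 + - ki * x) * hermite j x.
Definition cos_part j x := weighted_hermite j x * cos (kr * x).
Definition sin_part j x := weighted_hermite j x * sin (kr * x).

Definition ladder (a : nat -> R) p :=
  - (2 * m + 1) / 2 * a (S (S p)) + (1 - 2 * m) * INR (S p) * a p + - ki * a (S p).

Lemma ex_derive_weighted_hermite j x : ex_derive (weighted_hermite j) x.
Proof. unfold weighted_hermite. auto_derive. eexists; apply is_derive_hermite. Qed.

Lemma is_derive_weighted_hermite p x :
  is_derive (weighted_hermite (S p)) x (ladder (fun j => weighted_hermite j x) p).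
Proof.
  unfold ladder, weighted_hermite. auto_derive; [eexists; apply is_derive_hermite|].
  rewrite (is_derive_unique (fun t : R => hermite (S p) t) x _ (is_derive_hermite (S p) x)).
  simpl pred. rewrite (hermite_SS p x). replace (x * (x * 1)) with (x ^ 2) by ring. field.
Qed.

Lemma is_derive_cos_part p x :
  is_derive (cos_part (S p)) x (ladder (fun j => cos_part j x) p + - kr * sin_part (S p) x).
Proof.
  unfold cos_part. auto_derive; [apply ex_derive_weighted_hermite|].
  rewrite (is_derive_unique (fun t : R => weighted_hermite (S p) t) x _
             (is_derive_weighted_hermite p x)).
  unfold ladder, sin_part. ring.
Qed.

Lemma is_derive_sin_part p x :
  is_derive (sin_part (S p)) x (ladder (fun j => sin_part j x) p + kr * cos_part (S p) x).
Proof.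
  unfold sin_part. auto_derive; [apply ex_derive_weighted_hermite|].
  rewrite (is_derive_unique (fun t : R => weighted_hermite (S p) t) x _
             (is_derive_weighted_hermite p x)).
  unfold ladder, cos_part. ring.
Qed.

Lemma ex_derive_cos_part j x : ex_derive (cos_part j) x.
Proof. unfold cos_part. auto_derive. apply ex_derive_weighted_hermite. Qed.

Lemma ex_derive_sin_part j x : ex_derive (sin_part j) x.
Proof. unfold sin_part. auto_derive. apply ex_derive_weighted_hermite. Qed.

Lemma exp_decaying_weighted_hermite j : exp_decaying (weighted_hermite j).
Proof. apply exp_bounded_mul_gaussian with (INR j); [lra|apply exp_bounded_hermite]. Qed.

Lemma exp_decaying_cos_part j : exp_decaying (cos_part j).
Proof.
  apply exp_bounded_mul_bounded; [apply exp_decaying_weighted_hermite|].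
  intro x. apply Rabs_le, COS_bound.
Qed.

Lemma exp_decaying_sin_part j : exp_decaying (sin_part j).
Proof.
  apply exp_bounded_mul_bounded; [apply exp_decaying_weighted_hermite|].
  intro x. apply Rabs_le, SIN_bound.
Qed.

Definition cos_moment j := RInt_line (cos_part j).
Definition sin_moment j := RInt_line (sin_part j).

Lemma is_RInt_line_cos_part j : is_RInt_line (cos_part j) (cos_moment j).
Proof.
  apply RInt_line_correct; [|apply exp_decaying_cos_part].
  intro x. apply (@ex_derive_continuous R_AbsRing R_NormedModule), ex_derive_cos_part.
Qed.

Lemma is_RInt_line_sin_part j : is_RInt_line (sin_part j) (sin_moment j).
Proof.
  apply RInt_line_correct; [|apply exp_decaying_sin_part].
  intro x. apply (@ex_derive_continuous R_AbsRing R_NormedModule), ex_derive_sin_part.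
Qed.

Lemma is_RInt_line_ladder (f : nat -> R -> R) (I : nat -> R) p :
  (forall j, is_RInt_line (f j) (I j)) ->
  is_RInt_line (fun x => ladder (fun j => f j x) p) (ladder I p).
Proof.
  intro Hf. unfold ladder.
  apply is_RInt_line_plus; [apply is_RInt_line_plus|]; apply is_RInt_line_scal, Hf.
Qed.

Lemma ladder_cos_moment p : ladder cos_moment p + - kr * sin_moment (S p) = 0.
Proof.
  apply (is_RInt_line_unique (fun x => ladder (fun j => cos_part j x) p + - kr * sin_part (S p) x)).
  - apply is_RInt_line_plus.
    + apply is_RInt_line_ladder, is_RInt_line_cos_part.
    + apply is_RInt_line_scal, is_RInt_line_sin_part.
  - apply (is_RInt_line_derive_decaying (cos_part (S p)));
      [apply is_derive_cos_part| |apply exp_decaying_cos_part].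
    intro x. apply (@ex_derive_continuous R_AbsRing R_NormedModule). unfold ladder.
    auto_derive; repeat split; auto using ex_derive_cos_part, ex_derive_sin_part.
Qed.

Lemma ladder_sin_moment p : ladder sin_moment p + kr * cos_moment (S p) = 0.
Proof.
  apply (is_RInt_line_unique (fun x => ladder (fun j => sin_part j x) p + kr * cos_part (S p) x)).
  - apply is_RInt_line_plus.
    + apply is_RInt_line_ladder, is_RInt_line_sin_part.
    + apply is_RInt_line_scal, is_RInt_line_cos_part.
  - apply (is_RInt_line_derive_decaying (sin_part (S p)));
      [apply is_derive_sin_part| |apply exp_decaying_sin_part].
    intro x. apply (@ex_derive_continuous R_AbsRing R_NormedModule). unfold ladder.
    auto_derive; repeat split; auto using ex_derive_cos_part, ex_derive_sin_part.
Qed.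

End GaussianHermiteIntegrals.

Lemma is_RInt_gen_pair {Fa Fb : (R -> Prop) -> Prop} {FFa : Filter Fa} {FFb : Filter Fb}
  (f g : R -> R) lf lg :
  is_RInt_gen f Fa Fb lf -> is_RInt_gen g Fa Fb lg ->
  @is_RInt_gen C_R_NormedModule (fun x => (f x, g x)) Fa Fb (lf, lg).
Proof.
  intros Hf Hg P [eps HP].
  specialize (Hf (ball lf eps) (locally_ball lf eps)).
  specialize (Hg (ball lg eps) (locally_ball lg eps)).
  unfold filtermapi in *.
  generalize (filter_and _ _ Hf Hg). apply filter_imp.
  intros [a b] [[yf [Hyf Bf]] [yg [Hyg Bg]]].
  exists (yf, yg). split.
  - apply (is_RInt_fct_extend_pair (U := R_NormedModule) (V := R_NormedModule)); assumption.
  - apply HP. split; assumption.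
Qed.

Definition hermite_norm j := / (Rpower PI (1/4) * sqrt (2 ^ j * INR (fact j))).

Lemma hermite_norm_S j : hermite_norm j = hermite_norm (S j) * sqrt (2 * INR (S j)).
Proof.
  unfold hermite_norm.
  assert (Hfact : 0 < 2 ^ j * INR (fact j)).
  { apply Rmult_lt_0_compat; [apply pow_lt; lra|apply lt_0_INR, lt_O_fact]. }
  assert (HS : 0 < 2 * INR (S j)) by (pose proof (lt_0_INR (S j) (Nat.lt_0_succ j)); lra).
  replace (2 ^ S j * INR (fact (S j))) with (2 * INR (S j) * (2 ^ j * INR (fact j)))
    by (rewrite fact_simpl, mult_INR; simpl; ring).
  rewrite (sqrt_mult_alt (2 * INR (S j))) by lra.
  assert (0 < Rpower PI (1/4)) by apply exp_pos.
  pose proof (sqrt_lt_R0 _ Hfact). pose proof (sqrt_lt_R0 _ HS).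
  field. lra.
Qed.

Lemma hermite_norm_S_of_SS p :
  hermite_norm (S p) = 2 * hermite_norm (S (S p)) / sqrt (2 / INR (S (S p))).
Proof.
  set (b := INR (S (S p))). assert (Hb : 0 < b) by apply lt_0_INR, Nat.lt_0_succ.
  assert (Hs : sqrt (2 * b) * sqrt (2 / b) = 2).
  { rewrite <- sqrt_mult_alt by lra. replace (2 * b * (2 / b)) with (2 * 2) by (field; lra).
    apply sqrt_square. lra. }
  assert (0 < sqrt (2 / b)) by (apply sqrt_lt_R0, Rdiv_lt_0_compat; lra).
  rewrite hermite_norm_S. fold b.
  apply (Rmult_eq_reg_r (sqrt (2 / b))); [|lra].
  rewrite Rmult_assoc, Hs. field. lra.
Qed.

Lemma hermite_norm_of_SS p :
  hermite_norm p = 2 * INR (S p) * hermite_norm (S (S p)) / sqrt (INR (S p) / INR (S (S p))).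
Proof.
  set (b := INR (S (S p))). set (c := INR (S p)).
  assert (Hb : 0 < b) by apply lt_0_INR, Nat.lt_0_succ.
  assert (Hc : 0 < c) by apply lt_0_INR, Nat.lt_0_succ.
  assert (Hs : sqrt (2 * b) * sqrt (2 * c) * sqrt (c / b) = 2 * c).
  { rewrite <- !sqrt_mult_alt by (try apply Rmult_le_pos; try apply sqrt_pos; lra).
    replace (2 * b * (2 * c) * (c / b)) with ((2 * c) * (2 * c)) by (field; lra).
    apply sqrt_square. lra. }
  assert (0 < sqrt (c / b)) by (apply sqrt_lt_R0, Rdiv_lt_0_compat; lra).
  rewrite (hermite_norm_S p), (hermite_norm_S (S p)). fold b c.
  apply (Rmult_eq_reg_r (sqrt (c / b))); [|lra].
  rewrite !Rmult_assoc, <- (Rmult_assoc (sqrt (2 * b))), Hs. field. lra.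
Qed.

Definition moment m kr ki j : C := (cos_moment m kr ki j, sin_moment m kr ki j).

Lemma moment_recurrence m kr ki p : - (1/2) < m ->
  moment m kr ki (S (S p)) =
    (RtoC (2 / (2 * m + 1))
      * (RtoC ((1 - 2 * m) * INR (S p)) * moment m kr ki p
        + Ci * (kr, ki) * moment m kr ki (S p)))%C.
Proof.
  intro hm.
  pose proof (ladder_cos_moment m kr ki hm p) as Hc.
  pose proof (ladder_sin_moment m kr ki hm p) as Hs.
  unfold ladder in Hc, Hs. unfold moment, Cmult, Cplus, RtoC, Ci; cbn [fst snd].
  f_equal; apply (Rmult_eq_reg_l (2 * m + 1)); try lra; field_simplify; lra.
Qed.

Lemma hermite_coef_integrand m kr ki j x :
  ((RtoC (exp (- m * x ^ 2)) * cexp (Ci * (kr, ki) * RtoC x)) * RtoC (hermite_fun j x))%C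
  = (hermite_norm j * cos_part m kr ki j x, hermite_norm j * sin_part m kr ki j x).
Proof.
  assert (Hexp : exp (- m * x ^ 2) * exp (- ki * x) * exp (- x ^ 2 / 2)
                 = exp (- (m + 1/2) * x ^ 2 + - ki * x)).
  { rewrite <- !exp_plus. f_equal. field. }
  unfold cos_part, sin_part, weighted_hermite, hermite_fun, hermite_norm.
  rewrite <- Hexp.
  unfold cexp, Cmult, RtoC, Ci, Re, Im; simpl.
  replace ((0 * kr - 1 * ki) * x - (0 * ki + 1 * kr) * 0) with (- ki * x) by ring.
  replace ((0 * kr - 1 * ki) * 0 + (0 * ki + 1 * kr) * x) with (kr * x) by ring.
  f_equal; ring.
Qed.

Lemma hermite_coef_moment m kr ki j : - (1/2) < m ->
  hermite_coef m (kr, ki) j = (RtoC (hermite_norm j) * moment m kr ki j)%C.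
Proof.
  intro hm. unfold hermite_coef.
  apply (@is_RInt_gen_unique C_R_CompleteNormedModule);
    try apply Proper_StrongProper, Rbar_locally_filter.
  apply (is_RInt_gen_ext (fun x => (hermite_norm j * cos_part m kr ki j x,
                                    hermite_norm j * sin_part m kr ki j x))).
  { apply filter_forall. intros ab x _. symmetry. apply hermite_coef_integrand. }
  replace (RtoC (hermite_norm j) * moment m kr ki j)%C
    with (hermite_norm j * cos_moment m kr ki j, hermite_norm j * sin_moment m kr ki j)
    by (unfold moment, Cmult, RtoC; simpl; f_equal; ring).
  apply is_RInt_gen_pair; apply is_RInt_line_scal;
    [apply is_RInt_line_cos_part|apply is_RInt_line_sin_part]; exact hm.
Qed.

Theorem lemma2p1 (m : R) (k : C) (hm : - (1/2) < m) (n : nat) (hn : (1 <= n)%nat) :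
  hermite_coef m k (S n) =
    ((RtoC (/ (2 * m + 1)) * Ci * k * RtoC (sqrt (2 / INR (S n))) * hermite_coef m k n)
     - (RtoC ((2 * m - 1) / (2 * m + 1)) * RtoC (sqrt (INR n / INR (S n)))
        * hermite_coef m k (n - 1)))%C.
Proof.
  destruct n as [|p]; [lia|]. replace (S p - 1)%nat with p by lia.
  destruct k as [kr ki].
  rewrite !hermite_coef_moment, moment_recurrence by exact hm.
  rewrite (hermite_norm_S_of_SS p), (hermite_norm_of_SS p).
  assert (0 < sqrt (2 / INR (S (S p)))).
  { apply sqrt_lt_R0, Rdiv_lt_0_compat; [lra|apply lt_0_INR; lia]. }
  assert (0 < sqrt (INR (S p) / INR (S (S p)))).
  { apply sqrt_lt_R0, Rdiv_lt_0_compat; apply lt_0_INR; lia. }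
  destruct (moment m kr ki p) as [c0 s0], (moment m kr ki (S p)) as [c1 s1].
  unfold Cminus, Cmult, Cplus, Copp, RtoC, Ci; cbn [fst snd].
  f_equal; field; repeat split; lra.
Qed.
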